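(* Let $\mathcal{R},\mathcal{V},\mathcal{R}',\mathcal{V}'$ be finite sets with $|\mathcal{R}|=|\mathcal{R}'|$. For any positive integer $k$, if a released table $\tau'$ on $(\mathcal{R}',\mathcal{V}')$ is $k$-anonymous, then $(\Delta,\tau')$ is $Pk$-anonymous for every privacy mechanism $\Delta=(\mathcal{R},\mathcal{V},\mathcal{R}',\mathcal{V}',\Pi,\Delta)$.
   Context: A table on $(\mathcal{R},\mathcal{V})$ is a map $\mathcal{R}\to\mathcal{V}$; $\mathcal{T}$, $\mathcal{T}'$ denote the sets of tables on $(\mathcal{R},\mathcal{V})$ and $(\mathcal{R}',\mathcal{V}')$. For sets $X,Y$, $X\to Y$ is the set of maps $X\to Y$. A privacy mechanism is $(\mathcal{R},\mathcal{V},\mathcal{R}',\mathcal{V}',\Pi,\Delta)$ with $\Pi$ uniformly distributed over bijections $\mathcal{R}\to\mathcal{R}'$ and $\Delta$ a random variable in $\mathcal{T}\to(\mathcal{R}\to\mathcal{V}')$; it is a privacy mechanism from $T$ to $T'$ (random variables on $\mathcal{T},\mathcal{T}'$) if $T,\Pi,\Delta$ are mutually independent and $\Delta(T)=T'\circ\Pi$. $\tau'$ is $k$-anonymous if for every $r'\in\mathcal{R}'$ there are at least $k$ elements $\hat r'\in\mathcal{R}'$ with $\tau'(\hat r')=\tau'(r')$. $(\Delta,\tau')$ is $Pk$-anonymous (real $k\ge1$) if for all random variables $T,T'$ such that $\Delta$ is a privacy mechanism from $T$ to $T'$ and all $r\in\mathcal{R}$, $r'\in\mathcal{R}'$, $\Pr[\Pi(r)=r'\mid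 T'=\tau']\le1/k$. *)

From HB Require Import structures.
From mathcomp Require Import all_boot all_order all_algebra.
From mathcomp Require Import all_classical all_reals all_analysis.
Set Implicit Arguments. Unset Strict Implicit. Unset Printing Implicit Defensive.
Import Order.TTheory GRing.Theory Num.Theory.
Local Open Scope classical_set_scope.
Local Open Scope ring_scope.

Definition is_rv (d : measure_display) (Omega : measurableType d) (A : finType)
  (X : Omega -> A) : Prop :=
  forall a : A, measurable (X @^-1` [set a]).

Definition pr (d : measure_display) (Omega : measurableType d) (Rr : realType)
  (P : probability Omega Rr) (E : set Omega) : Rr := fine (P E).

(* Conditional probability Pr[E | F] = Pr[E /\ F] / Pr[F] (= 0 if Pr[F] = 0). *)
Definition cond_pr (d : measure_display) (Omega : measurableType d) (Rr : realType)
  (P : probability Omega Rr) (E F : set Omega) : Rr :=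
  pr P (E `&` F) / pr P F.

Definition indep3 (d : measure_display) (Omega : measurableType d) (Rr : realType)
  (P : probability Omega Rr) (A B C : finType)
  (X : Omega -> A) (Y : Omega -> B) (Z : Omega -> C) : Prop :=
  forall (SA : {set A}) (SB : {set B}) (SC : {set C}),
    P ([set w | X w \in SA] `&` [set w | Y w \in SB] `&` [set w | Z w \in SC])
    = (P [set w | X w \in SA] * P [set w | Y w \in SB] * P [set w | Z w \in SC])%E.

Notation table R V := {ffun R -> V}.

Definition bijectiveb (R R' : finType) (f : {ffun R -> R'}) : bool :=
  injectiveb f && [forall y : R', exists x : R, f x == y].

Definition bijs (R R' : finType) : {set {ffun R -> R'}} :=
  [set f | bijectiveb f].

Definition uniform_bij (d : measure_display) (Omega : measurableType d) (Rr : realType)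
  (P : probability Omega Rr) (R R' : finType) (Pi : Omega -> {ffun R -> R'}) : Prop :=
  forall f : {ffun R -> R'},
    pr P [set w | Pi w = f] = if f \in bijs R R' then (#|bijs R R'|%:R)^-1 else 0.

Definition privacy_mechanism (d : measure_display) (Omega : measurableType d) (Rr : realType)
  (P : probability Omega Rr) (R V R' V' : finType)
  (Pi : Omega -> {ffun R -> R'})
  (Delta : Omega -> {ffun table R V -> table R V'}) : Prop :=
  is_rv Pi /\ uniform_bij P Pi /\ is_rv Delta.

Definition mechanism_from (d : measure_display) (Omega : measurableType d) (Rr : realType)
  (P : probability Omega Rr) (R V R' V' : finType)
  (Pi : Omega -> {ffun R -> R'})
  (Delta : Omega -> {ffun table R V -> table R V'})
  (T : Omega -> table R V) (T' : Omega -> table R' V') : Prop :=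
  [/\ is_rv T, is_rv T', indep3 P T Pi Delta &
      forall w r, Delta w (T w) r = T' w (Pi w r)].

Definition k_anonymous (R' V' : finType) (tau' : table R' V') (k : nat) : Prop :=
  forall r' : R', (k <= #|[set rh : R' | tau' rh == tau' r']|)%N.

Definition Pk_anonymous (d : measure_display) (Omega : measurableType d) (Rr : realType)
  (P : probability Omega Rr) (R V R' V' : finType)
  (Pi : Omega -> {ffun R -> R'})
  (Delta : Omega -> {ffun table R V -> table R V'})
  (tau' : table R' V') (k : Rr) : Prop :=
  forall (T : Omega -> table R V) (T' : Omega -> table R' V'),
    mechanism_from P Pi Delta T T' ->
    forall (r : R) (r' : R'),
      cond_pr P [set w | Pi w r = r'] [set w | T' w = tau'] <= k^-1.

From HB Require Import structures.
From mathcomp Require Import all_boot all_order all_algebra.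
From mathcomp Require Import all_classical all_reals all_analysis.
From mathcomp Require Import perm.
Import Order.TTheory GRing.Theory Num.Theory.
Set Implicit Arguments. Unset Strict Implicit. Unset Printing Implicit Defensive.

(* Condition on the original table [T] and the mechanism [Delta]: by independence
   [Pi] stays uniform over the bijections. Given [T = t] and [Delta = dl], the
   release equals [tau'] exactly when [Pi] is a bijection [p] with
   [tau' (p x) = dl t x] for all [x]. For every [y] with [tau' y = tau' r'],
   post-composing with the transposition (r' y) injects those [p] with
   [p r = r'] into those with [p r = y]; k-anonymity provides at least [k] such
   [y], so at most a fraction 1/k of the admissible bijections send [r] to [r']. *)

Section CompatibleBijections.
Variables (R R' V' : finType) (tau' : {ffun R' -> V'}) (u : R -> V').

Definition compatible (p : {ffun R -> R'}) : bool := [forall x, tau' (p x) == u x].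

Lemma release_eq_compatible (p : {ffun R -> R'}) (t' : {ffun R' -> V'}) :
  bijectiveb p -> (forall x, u x = t' (p x)) -> t' = tau' <-> compatible p.
Proof.
case/andP => _ /forallP p_surj u_t'; split => [t'E | /forallP p_comp].
  by apply/forallP => x; rewrite -t'E u_t'.
apply/ffunP => y; have /existsP [x /eqP <-] := p_surj y.
by rewrite -u_t' (eqP (p_comp x)).
Qed.

Lemma bijectiveb_tperm_comp (a b : R') (p : {ffun R -> R'}) :
  bijectiveb p -> bijectiveb [ffun x => tperm a b (p x)].
Proof.
case/andP => /injectiveP p_inj /forallP p_surj; apply/andP; split.
  by apply/injectiveP => x1 x2; rewrite !ffunE => /perm_inj /p_inj.
apply/forallP => y; have /existsP [x /eqP px] := p_surj (tperm a b y).
by apply/existsP; exists x; rewrite ffunE px tpermK.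
Qed.

Lemma card_compatible_at_le (r : R) (r' y : R') : tau' y = tau' r' ->
  (#|[set p in bijs R R' | compatible p && (p r == r')]|
   <= #|[set p in bijs R R' | compatible p && (p r == y)]|)%N.
Proof.
move=> tau'_y.
pose swap (p : {ffun R -> R'}) : {ffun R -> R'} := [ffun x => tperm r' y (p x)].
have swap_inj : injective swap.
  move=> p1 p2 /ffunP e; apply/ffunP => x.
  by have := e x; rewrite !ffunE => /perm_inj.
rewrite -(card_imset _ swap_inj); apply: subset_leq_card.
apply/fintype.subsetP => q /imsetP [p].
rewrite !inE => /andP [p_bij /andP [p_comp /eqP p_r]] ->.
rewrite bijectiveb_tperm_comp //= ffunE p_r tpermL eqxx andbT.
apply/forallP => x; rewrite ffunE -(eqP (forallP p_comp x)).
by case: tpermP => [->|->|] //; rewrite tau'_y.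
Qed.

Lemma k_anonymous_card_compatible (k : nat) (r : R) (r' : R') :
  k_anonymous tau' k ->
  (k * #|[set p in bijs R R' | compatible p && (p r == r')]|
   <= #|[set p in bijs R R' | compatible p]|)%N.
Proof.
move=> tau'_anon.
have -> : #|[set p in bijs R R' | compatible p]|
    = (\sum_y #|[set p in bijs R R' | compatible p && (p r == y)]|)%N.
  rewrite -sum1_card (partition_big (fun p : {ffun R -> R'} => p r) xpredT) //.
  by apply: eq_bigr => y _; rewrite -sum1_card; apply: eq_bigl => p; rewrite !inE andbA.
rewrite (bigID (fun y => tau' y == tau' r')) /=; apply: leq_trans (leq_addr _ _).
apply: (@leq_trans
  (\sum_(y | tau' y == tau' r') #|[set p in bijs R R' | compatible p && (p r == r')]|)).
  rewrite sum_nat_const leq_mul2r (leq_trans (tau'_anon r')) ?orbT //.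
  by apply: eq_leq; apply: eq_card => y; apply/idP/idP; rewrite in_setE.
by apply: leq_sum => y /eqP; apply: card_compatible_at_le.
Qed.

End CompatibleBijections.

Local Open Scope ring_scope.
Local Open Scope classical_set_scope.

Lemma sum_indicator_uniform (Rr : numDomainType) (B : finType) (S : {set B})
    (c : B -> bool) (p : B -> Rr) (a : Rr) :
  (forall y, p y = if y \in S then a else 0) ->
  \sum_y (c y)%:R * p y = #|[set y in S | c y]|%:R * a.
Proof.
move=> pE; rewrite mulr_natl -sumr_const [RHS]big_mkcond.
apply: eq_bigr => y _.
by rewrite pE inE; case: (y \in S); case: (c y); rewrite ?mul1r ?mul0r ?mulr0.
Qed.

Section FiniteRandomVariables.
Variables (d : measure_display) (Omega : measurableType d) (Rr : realType)
  (P : probability Omega Rr).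

Lemma pr_ge0 (E : set Omega) : 0 <= pr P E.
Proof. exact/fine_ge0/measure_ge0. Qed.

Lemma le_pr (E F : set Omega) :
  measurable E -> measurable F -> E `<=` F -> pr P E <= pr P F.
Proof.
move=> mE mF EF; apply: fine_le; rewrite ?fin_num_measure //.
exact: le_measure (mem_set mE) (mem_set mF) EF.
Qed.

Lemma measurable_rv_preimage (A : finType) (X : Omega -> A) (S : set A) :
  is_rv X -> measurable (X @^-1` S).
Proof.
move=> rvX; have -> : X @^-1` S = \bigcup_(a in S) X @^-1` [set a].
  by apply/seteqP; split=> [w Sw|w [a Sa /= ->]] //; exists (X w).
by apply: fin_bigcup_measurable => [|a _]; [exact: finite_finset | exact: rvX].
Qed.

Lemma pr_partition (I : finType) (X : Omega -> I) (F : set Omega) :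
  is_rv X -> measurable F ->
  pr P F = \sum_i pr P (F `&` X @^-1` [set i]).
Proof.
move=> rvX mF; have mFX i : measurable (F `&` X @^-1` [set i]).
  exact: measurableI mF (rvX i).
have {1}-> : F = \bigcup_(i in [set: I]) (F `&` X @^-1` [set i]).
  by apply/seteqP; split => [w Fw|w [i _ []]] //; exists (X w).
rewrite /pr measure_fin_bigcup //; first last.
- by move=> i j _ _ [w [[_ /= ->] [_ /= ->]]].
- exact: finite_finset.
rewrite (fsbigE (enum I)) ?enum_uniq //; last by move=> i _; rewrite mem_enum.
rewrite -sum_fine; last by move=> i _; exact: fin_num_measure.
rewrite (eq_bigl xpredT) => [|i]; last exact: in_setT.
by rewrite big_enum /=; apply: eq_bigl => i; rewrite inE.
Qed.

Section ThreeIndependentVariables.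
Variables (A B C : finType) (X : Omega -> A) (Y : Omega -> B) (Z : Omega -> C).
Hypotheses (rvX : is_rv X) (rvY : is_rv Y) (rvZ : is_rv Z) (XYZ_indep : indep3 P X Y Z).

Lemma pr_indep3_atom x y z :
  pr P (X @^-1` [set x] `&` Y @^-1` [set y] `&` Z @^-1` [set z])
  = pr P (X @^-1` [set x]) * pr P (Y @^-1` [set y]) * pr P (Z @^-1` [set z]).
Proof.
have set1E (I : finType) (W : Omega -> I) i : [set w | W w \in [set i]%SET] = W @^-1` [set i].
  by apply/seteqP; split => w /=; rewrite inE => /eqP.
have := XYZ_indep [set x]%SET [set y]%SET [set z]%SET; rewrite !set1E /pr => ->.
by rewrite !fineM ?fin_numM ?fin_num_measure.
Qed.

Lemma pr_indep3_event (S : {set B}) (F : set Omega) (c : A -> B -> C -> bool) :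
  measurable F -> (forall y, y \notin S -> pr P (Y @^-1` [set y]) = 0) ->
  (forall w, Y w \in S -> F w <-> c (X w) (Y w) (Z w)) ->
  pr P F = \sum_x \sum_z pr P (X @^-1` [set x]) * pr P (Z @^-1` [set z]) *
             \sum_y (c x y z)%:R * pr P (Y @^-1` [set y]).
Proof.
move=> mF Y_null F_c; pose W w := (X w, Z w, Y w).
have W_atom x z y : W @^-1` [set (x, z, y)]
    = X @^-1` [set x] `&` Y @^-1` [set y] `&` Z @^-1` [set z].
  by apply/seteqP; split => w /=; rewrite /W; [case=> -> -> -> | case=> [[-> ->] ->]].
have rvW : is_rv W.
  by case=> [[x z] y]; rewrite W_atom; apply: measurableI; first exact: measurableI.
rewrite (pr_partition rvW mF).
under [RHS]eq_bigr => x _ do under eq_bigr => z _ do rewrite mulr_sumr.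
rewrite !pair_bigA; apply: eq_bigr => -[[x z] y] _ /=.
have [yS | yNS] := boolP (y \in S); last first.
  rewrite Y_null // !mulr0; apply/eqP; rewrite eq_le pr_ge0 andbT -(Y_null y yNS).
  apply: le_pr => [||w [_ [_ _]] //]; last exact: rvY.
  by apply: measurableI => //; exact: rvW.
have -> : F `&` W @^-1` [set (x, z, y)] = if c x y z then W @^-1` [set (x, z, y)] else set0.
  have F_atom w : W w = (x, z, y) -> F w <-> c x y z.
    by case=> <- <- Ywy; rewrite -Ywy in yS *; exact: F_c.
  apply/seteqP; split => w; case: ifP => cxyz //=; first by case.
    by case=> Fw /F_atom/iffLR/(_ Fw); rewrite cxyz.
  by move=> Ww; split=> //; apply/(F_atom _ Ww).
case: (c x y z); last by rewrite /pr measure0 mul0r mulr0.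
by rewrite W_atom pr_indep3_atom mul1r mulrAC.
Qed.

Lemma indep3_uniform_ler (S : {set B}) (k : nat) (F1 F2 : set Omega)
    (c1 c2 : A -> B -> C -> bool) :
  (forall y, pr P (Y @^-1` [set y]) = if y \in S then #|S|%:R^-1 else 0) ->
  measurable F1 -> measurable F2 ->
  (forall w, Y w \in S -> F1 w <-> c1 (X w) (Y w) (Z w)) ->
  (forall w, Y w \in S -> F2 w <-> c2 (X w) (Y w) (Z w)) ->
  (forall x z, k * #|[set y in S | c1 x y z]| <= #|[set y in S | c2 x y z]|)%N ->
  k%:R * pr P F1 <= pr P F2.
Proof.
move=> Y_unif mF1 mF2 F1_c1 F2_c2 card_le.
have Y_null y : y \notin S -> pr P (Y @^-1` [set y]) = 0.
  by rewrite Y_unif => /negbTE ->.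
rewrite (pr_indep3_event mF1 Y_null F1_c1) (pr_indep3_event mF2 Y_null F2_c2).
rewrite mulr_sumr; apply: ler_sum => x _; rewrite mulr_sumr; apply: ler_sum => z _.
rewrite !(sum_indicator_uniform _ Y_unif) mulrCA.
rewrite ler_wpM2l ?mulr_ge0 ?pr_ge0 // mulrA -natrM.
by rewrite ler_wpM2r ?invr_ge0 ?ler0n // ler_nat.
Qed.

End ThreeIndependentVariables.

Lemma cond_pr_le_inv (E F : set Omega) (k : Rr) :
  0 < k -> k * pr P (E `&` F) <= pr P F -> cond_pr P E F <= k^-1.
Proof.
move=> k_gt0 kEF_le_F; rewrite /cond_pr.
have [-> | F_neq0] := eqVneq (pr P F) 0; first by rewrite invr0 mulr0 invr_ge0 ltW.
have F_gt0 : 0 < pr P F by rewrite lt0r F_neq0 pr_ge0.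
by rewrite ler_pdivrMr // -(ler_pM2l k_gt0) mulrA mulfV ?gt_eqF ?mul1r.
Qed.

End FiniteRandomVariables.

Theorem lemma1 (d : measure_display) (Omega : measurableType d) (Rr : realType)
  (P : probability Omega Rr) (R V R' V' : finType)
  (hcard : #|R| = #|R'|) (k : nat) (hk : (0 < k)%N)
  (Pi : Omega -> {ffun R -> R'})
  (Delta : Omega -> {ffun table R V -> table R V'})
  (tau' : table R' V') :
  privacy_mechanism P Pi Delta ->
  k_anonymous tau' k ->
  Pk_anonymous P Pi Delta tau' (k%:R).
Proof.
(* [hcard] is unused: only the uniformity of [Pi] over [bijs R R'] matters. *)
move=> [rvPi [Pi_unif rvDelta]] tau'_anon T T' [rvT rvT' indep T'_Pi] r r'.
apply: cond_pr_le_inv; first by rewrite ltr0n.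
have T'_compat w : Pi w \in bijs R R' ->
    T' w = tau' <-> compatible tau' (Delta w (T w)) (Pi w).
  by rewrite inE => Pi_bij; apply: release_eq_compatible => // x; rewrite T'_Pi.
apply: (indep3_uniform_ler rvT rvPi rvDelta indep Pi_unif
  (c1 := fun t p dl => compatible tau' (dl t) p && (p r == r'))
  (c2 := fun t p dl => compatible tau' (dl t) p)) => //.
- apply: measurableI; last exact: rvT' tau'.
  exact: measurable_rv_preimage [set p : {ffun R -> R'} | p r = r'] rvPi.
- exact: rvT' tau'.
- move=> w /T'_compat Ew /=.
  by split => [[/eqP -> /Ew ->] | /andP [/Ew ? /eqP]].
- by move=> t dl; have := k_anonymous_card_compatible (dl t) r r' tau'_anon.
Qed.
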